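(* Let $F$ be a field of characteristic $2$, let $\mathfrak b$ be an anisotropic symmetric bilinear form over $F$, and let $\phi$ be a subform of the quasilinear quadratic form $\phi_{\mathfrak b}$. Then there exists a subform $\mathfrak c$ of $\mathfrak b$ with $\phi_{\mathfrak c}\simeq\phi$, and such a $\mathfrak c$ is unique up to isometry.
   Context: Symmetric bilinear forms are non-degenerate and finite-dimensional; $\phi_{\mathfrak b}(v)=\mathfrak b(v,v)$ is the quadratic form associated to $\mathfrak b$, which is quasilinear ($\phi(v+w)=\phi(v)+\phi(w)$). A subform of a symmetric bilinear form $\mathfrak b$ is a form isometric to an orthogonal summand of $\mathfrak b$. A subform of a quasilinear quadratic form $\phi$ is a quasilinear form $\psi$ with $\phi\simeq\psi\perp\sigma$ for some quasilinear quadratic form $\sigma$. *)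

From HB Require Import structures.
From mathcomp Require Import all_boot all_order all_algebra.
Set Implicit Arguments. Unset Strict Implicit. Unset Printing Implicit Defensive.
Import Order.TTheory GRing.Theory Num.Theory.
Local Open Scope ring_scope.

Section Forms.
Variable F : fieldType.

(* A (non-degenerate) symmetric bilinear form on F^n, given by its Gram
   matrix B : (x, y) |-> x B y^T. *)
Definition sym_bilin_form n (B : 'M[F]_n) : Prop :=
  B^T = B /\ \det B != 0.

Definition bform n (B : 'M[F]_n) (x y : 'rV[F]_n) : F := (x *m B *m y^T) 0 0.

Definition phi_b n (B : 'M[F]_n) : 'rV[F]_n -> F := fun x => bform B x x.

Definition anisotropic_bilin n (B : 'M[F]_n) : Prop :=
  forall x : 'rV[F]_n, bform B x x = 0 -> x = 0.

(* isometry of bilinear forms (possibly given on spaces of a priori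
   different dimensions): an invertible linear map P with B(x,y) = C(xP,yP) *)
Definition bilin_iso m n (B : 'M[F]_m) (C : 'M[F]_n) : Prop :=
  m = n /\ exists P : 'M[F]_(m, n), row_free P /\ P *m C *m P^T = B.

Definition bilin_osum m k (B : 'M[F]_m) (D : 'M[F]_k) : 'M[F]_(m + k) :=
  block_mx B 0 0 D.

Definition bilin_subform m n (C : 'M[F]_m) (B : 'M[F]_n) : Prop :=
  sym_bilin_form C /\
  exists k (D : 'M[F]_k), sym_bilin_form D /\ bilin_iso (bilin_osum C D) B.

Definition quasilinear n (q : 'rV[F]_n -> F) : Prop :=
  (forall a x, q (a *: x) = a ^+ 2 * q x) /\
  (forall x y, q (x + y) = q x + q y).

Definition quad_iso m n (q1 : 'rV[F]_m -> F) (q2 : 'rV[F]_n -> F) : Prop :=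
  m = n /\ exists P : 'M[F]_(m, n), row_free P /\ forall x, q1 x = q2 (x *m P).

Definition quad_osum m k (q1 : 'rV[F]_m -> F) (q2 : 'rV[F]_k -> F)
  : 'rV[F]_(m + k) -> F := fun x => q1 (lsubmx x) + q2 (rsubmx x).

Definition ql_subform m n (psi : 'rV[F]_m -> F) (phi : 'rV[F]_n -> F) : Prop :=
  quasilinear psi /\
  exists k (s : 'rV[F]_k -> F), quasilinear s /\ quad_iso phi (quad_osum psi s).

End Forms.

(* In characteristic 2 the quadratic form [phi_b] of a symmetric bilinear
   form [b] is additive, since [phi_b (u - v) = phi_b u + phi_b v - 2 b(u,v)];
   if [b] is anisotropic it is therefore injective.

   Existence: if [phi_b ~ phi _|_ s], the copy of [phi] inside [phi_b] is
   spanned by the rows of some [Q], and [c := Q b Q^T] satisfies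
   [phi_c ~ phi].  The restriction [c] is anisotropic, hence non-degenerate,
   so the orthogonal complement of its span splits off from [b].

   Uniqueness: a subform [c] of [b] is again of the form [Q b Q^T].  An
   isometry [T] between [phi_c1] and [phi_c2] gives [phi_b (x Q1) =
   phi_b (x T Q2)] for all [x], so [Q1 = T Q2] by injectivity of [phi_b], and
   then [c1 = T c2 T^T]. *)
From mathcomp Require Import all_boot all_order all_algebra ring.
Import GRing.Theory.
Local Open Scope ring_scope.

Section Forms.
Set Implicit Arguments. Unset Strict Implicit.
Variable F : fieldType.

Lemma phi_b_mul m n (b : 'M[F]_n) (Q : 'M[F]_(m, n)) y :
  phi_b (Q *m b *m Q^T) y = phi_b b (y *m Q).
Proof. by rewrite /phi_b /bform trmx_mul !mulmxA. Qed.

Lemma trmx_congr_sym m n (b : 'M[F]_n) (Q : 'M[F]_(m, n)) :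
  b^T = b -> (Q *m b *m Q^T)^T = Q *m b *m Q^T.
Proof. by move=> bT; rewrite !trmx_mul trmxK bT mulmxA. Qed.

Lemma anisotropic_unitmx n (b : 'M[F]_n) :
  anisotropic_bilin b -> b \in unitmx.
Proof.
move=> anis; rewrite unitmxE unitfE; apply/negP => /det0P [y /eqP + yb].
by apply; apply: anis; rewrite /bform yb mul0mx mxE.
Qed.

Lemma anisotropic_restrict m n (b : 'M[F]_n) (Q : 'M[F]_(m, n)) :
  row_free Q -> anisotropic_bilin b -> anisotropic_bilin (Q *m b *m Q^T).
Proof.
move=> Qfree anis y; rewrite -/(phi_b _ y) phi_b_mul => /anis yQ0.
by apply: (row_free_inj Qfree); rewrite /= yQ0 mul0mx.
Qed.

Lemma mul_usubmx_row_mx0 m k n (A : 'M[F]_(m + k, n)) (y : 'rV[F]_m) :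
  y *m usubmx A = row_mx y 0 *m A.
Proof. by rewrite -[in RHS](vsubmxK A) mul_row_col mul0mx addr0. Qed.

Lemma row_free_usubmx m k (A : 'M[F]_(m + k)) :
  A \in unitmx -> row_free (usubmx A).
Proof.
move=> Au; apply: inj_row_free => y; rewrite mul_usubmx_row_mx0 => yA0.
have : row_mx y 0 = 0 :> 'rV_(m + k) by rewrite -(mulmxK Au (row_mx y 0)) yA0 mul0mx.
by rewrite -row_mx0 => /eq_row_mx [].
Qed.

(* Gram–Schmidt step: subtracting from the lower rows of [A] their projection
   [X *m Q] onto the span of [Q] makes them [b]-orthogonal to [Q]. *)
Lemma orthogonal_complement m k (b : 'M[F]_(m + k)) (A : 'M[F]_(m + k)) :
  b^T = b -> A \in unitmx -> usubmx A *m b *m (usubmx A)^T \in unitmx ->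
  exists2 P : 'M[F]_(m + k), P \in unitmx & exists D : 'M[F]_k,
    P *m b *m P^T = block_mx (usubmx A *m b *m (usubmx A)^T) 0 0 D.
Proof.
set Q := usubmx A => bT Au cu; set c := Q *m b *m Q^T.
set X := dsubmx A *m b *m Q^T *m invmx c; set R := dsubmx A - X *m Q.
have RbQ : R *m b *m Q^T = 0.
  have XQ : X *m Q *m b *m Q^T = X *m c by rewrite /c !mulmxA.
  by rewrite /R !mulmxBl XQ /X mulmxKV // subrr.
have QbR : Q *m b *m R^T = 0.
  have <- : (R *m b *m Q^T)^T = Q *m b *m R^T.
    by rewrite !trmx_mul trmxK bT mulmxA.
  by rewrite RbQ trmx0.
exists (col_mx Q R); last first.
  by exists (R *m b *m R^T); rewrite tr_col_mx mul_col_mx mul_col_row QbR RbQ.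
have -> : col_mx Q R = block_mx 1%:M 0 (- X) 1%:M *m A.
  by rewrite -[in RHS](vsubmxK A) mul_block_col !mul1mx mul0mx addr0 mulNmx addrC.
by rewrite unitmx_mul unitmxE det_lblock !det1 mulr1 unitr1.
Qed.

Lemma bilin_subform_usubmx m k (b : 'M[F]_(m + k)) (A : 'M[F]_(m + k)) :
  sym_bilin_form b -> A \in unitmx -> usubmx A *m b *m (usubmx A)^T \in unitmx ->
  bilin_subform (usubmx A *m b *m (usubmx A)^T) b.
Proof.
move=> [bT bdet] Au cu.
have [P Pu [D PbP]] := orthogonal_complement bT Au cu.
have DT : D^T = D.
  by have := trmx_congr_sym P bT; rewrite PbP tr_block_mx => /eq_block_mx [].
have Ddet : \det D != 0.
  have : \det (P *m b *m P^T) != 0.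
    by rewrite !det_mulmx det_tr !mulf_neq0 // -unitfE -unitmxE.
  by rewrite PbP det_lblock mulf_eq0 negb_or => /andP [].
split; first by split; rewrite ?trmx_congr_sym // -unitfE -unitmxE.
exists k, D; split; first by [].
by split=> //; exists P; rewrite row_free_unit PbP.
Qed.

Lemma bilin_subform_congr m n (c : 'M[F]_m) (b : 'M[F]_n) :
  bilin_subform c b -> exists Q : 'M[F]_(m, n), c = Q *m b *m Q^T.
Proof.
case=> _ [k [D [_ [_ [P [_ PbP]]]]]]; exists (usubmx P).
move: PbP; rewrite -[P]vsubmxK tr_col_mx mul_col_mx mul_col_row /bilin_osum.
by rewrite col_mxKu => /eq_block_mx [].
Qed.

Lemma quasilinear0 n (q : 'rV[F]_n -> F) : quasilinear q -> q 0 = 0.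
Proof. by case=> qZ _; rewrite -(scale0r 0) qZ expr2 !mul0r. Qed.

Lemma quad_osum_restrict m k (q : 'rV[F]_(m + k) -> F) (phi : 'rV[F]_m -> F)
    (s : 'rV[F]_k -> F) (P : 'M[F]_(m + k)) :
  quasilinear s -> P \in unitmx ->
  (forall x, q x = quad_osum phi s (x *m P)) ->
  forall y, q (y *m usubmx (invmx P)) = phi y.
Proof.
move=> qs Pu qP y; rewrite qP mul_usubmx_row_mx0 mulmxKV //.
by rewrite /quad_osum row_mxKl row_mxKr quasilinear0 // addr0.
Qed.

Lemma quad_iso_trans_sym m1 m2 n (q1 : 'rV[F]_m1 -> F) (q2 : 'rV[F]_m2 -> F)
    (q : 'rV[F]_n -> F) :
  quad_iso q1 q -> quad_iso q2 q -> quad_iso q1 q2.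
Proof.
move=> [e1 [M1 [M1f qM1]]] [e2 [M2 [M2f qM2]]]; subst m1 m2.
have M2u : M2 \in unitmx by rewrite -row_free_unit.
split=> //; exists (M1 *m invmx M2); split.
  by rewrite row_free_unit unitmx_mul unitmx_inv M2u -row_free_unit M1f.
by move=> x; rewrite qM1 qM2 !mulmxA mulmxKV.
Qed.

End Forms.

Section CharacteristicTwo.
Set Implicit Arguments. Unset Strict Implicit.
Variable F : fieldType.
Hypothesis charF : 2%N \in [pchar F].

Lemma phi_bB n (b : 'M[F]_n) u v :
  b^T = b -> phi_b b (u - v) = phi_b b u + phi_b b v.
Proof.
move=> bT; rewrite /phi_b /bform linearB /= !mulmxBl !mulmxBr.
rewrite [v *m b *m u^T](_ : _ = (u *m b *m v^T)^T); last first.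
  by rewrite !trmx_mul !trmxK bT mulmxA.
set x := u *m b *m u^T; set w := u *m b *m v^T; set y := v *m b *m v^T.
clearbody x w y; rewrite !mxE.
have w2 : w 0 0 + w 0 0 = 0 by rewrite -mulr2n -mulr_natr pcharf0 // mulr0.
by rewrite -[RHS]subr0 -w2; ring.
Qed.

Lemma phi_b_inj n (b : 'M[F]_n) :
  b^T = b -> anisotropic_bilin b -> injective (phi_b b).
Proof.
move=> bT anis u v e; apply/eqP; rewrite -subr_eq0; apply/eqP; apply: anis.
by rewrite -/(phi_b b _) phi_bB // e -mulr2n -mulr_natr pcharf0 // mulr0.
Qed.

Lemma bilin_iso_of_quad_iso m1 m2 n (b : 'M[F]_n)
    (Q1 : 'M[F]_(m1, n)) (Q2 : 'M[F]_(m2, n)) :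
  b^T = b -> anisotropic_bilin b ->
  quad_iso (phi_b (Q1 *m b *m Q1^T)) (phi_b (Q2 *m b *m Q2^T)) ->
  bilin_iso (Q1 *m b *m Q1^T) (Q2 *m b *m Q2^T).
Proof.
move=> bT anis [e [T [Tfree qT]]]; subst m2; split=> //; exists T; split=> //.
have TQ : T *m Q2 = Q1.
  apply/row_matrixP => i; rewrite !rowE mulmxA.
  by apply: (phi_b_inj bT anis); rewrite -[LHS]phi_b_mul -qT phi_b_mul.
by rewrite -TQ [(T *m Q2)^T]trmx_mul !mulmxA.
Qed.

End CharacteristicTwo.

Theorem lemma3p2 (F : fieldType) (charF : 2%N \in [pchar F])
  (n : nat) (b : 'M[F]_n) (hb : sym_bilin_form b) (anis : anisotropic_bilin b)
  (m : nat) (phi : 'rV[F]_m -> F) (hphi : ql_subform phi (phi_b b)) :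
  (exists (k : nat) (c : 'M[F]_k), bilin_subform c b /\ quad_iso (phi_b c) phi) /\
  (forall (k1 k2 : nat) (c1 : 'M[F]_k1) (c2 : 'M[F]_k2),
      bilin_subform c1 b -> bilin_subform c2 b ->
      quad_iso (phi_b c1) phi -> quad_iso (phi_b c2) phi ->
      bilin_iso c1 c2).
Proof.
have bT := hb.1.
split; last first.
  move=> k1 k2 c1 c2 /bilin_subform_congr [Q1 ->] /bilin_subform_congr [Q2 ->].
  move=> iso1 iso2; apply: (bilin_iso_of_quad_iso charF) => //.
  exact: quad_iso_trans_sym iso1 iso2.
case: hphi => _ [k [s [qs [enk [P [Pfree phiP]]]]]]; subst n.
have Pu : P \in unitmx by rewrite -row_free_unit.
set Q := usubmx (invmx P).
have Qfree : row_free Q by rewrite row_free_usubmx ?unitmx_inv.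
have cu : Q *m b *m Q^T \in unitmx.
  exact/anisotropic_unitmx/anisotropic_restrict.
exists m, (Q *m b *m Q^T); split.
  by apply: bilin_subform_usubmx; rewrite ?unitmx_inv.
split=> //; exists 1%:M; split; first by rewrite row_free_unit unitmx1.
by move=> y; rewrite mulmx1 phi_b_mul (quad_osum_restrict qs Pu phiP).
Qed.
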